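(* Let $G$ be a graph on $[n]$. If $G$ is 2-connected and crossing closed, then $G$ is tightly closed.
   Context: Graphs are finite simple graphs with vertex set $[n]$; edges are written $ij$ with $i<j$. Two edges $a_1a_2$ and $b_1b_2$ cross if $a_1<b_1<a_2<b_2$ or $b_1<a_1<b_2<a_2$. Two crossing edges $e,f$ are crossing closed if among all induced connected subgraphs of $G$ containing $e$ and $f$ there is a unique minimal one under containment, denoted $J(e,f)$; $G$ is crossing closed if all pairs of crossing edges are. $G$ is tightly closed if it is crossing closed and for all crossing edges $e,f$, $J(e,f)$ is a subgraph of $K_4$ (i.e. has exactly the four endpoints of $e$ and $f$ as vertices). *)

(* Graphs on [n] are represented with vertex type 'I_n
   (vertices 0..n-1, order-isomorphic to 1..n) and a symmetric irreflexive
   adjacency relation G : rel 'I_n. *)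
From mathcomp Require Import all_boot.
Set Implicit Arguments. Unset Strict Implicit. Unset Printing Implicit Defensive.

Definition simple_graph n (G : rel 'I_n) : Prop :=
  symmetric G /\ irreflexive G.

Definition is_edge n (G : rel 'I_n) (e : 'I_n * 'I_n) : bool :=
  (e.1 < e.2) && G e.1 e.2.

Definition cross n (e f : 'I_n * 'I_n) : bool :=
  ((e.1 < f.1) && (f.1 < e.2) && (e.2 < f.2)) ||
  ((f.1 < e.1) && (e.1 < f.2) && (f.2 < e.2)).

Definition induced_connected n (G : rel 'I_n) (S : {set 'I_n}) : bool :=
  [forall x in S, forall y in S,
     connect [rel u v | [&& G u v, u \in S & v \in S]] x y].

Definition two_connected n (G : rel 'I_n) : Prop :=
  2 < n /\ induced_connected G setT /\
  forall v : 'I_n, induced_connected G (setT :\ v).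

Definition endpoints n (e f : 'I_n * 'I_n) : {set 'I_n} :=
  [set e.1; e.2; f.1; f.2].

Definition admissible n (G : rel 'I_n) (e f : 'I_n * 'I_n) : pred {set 'I_n} :=
  fun S => (endpoints e f \subset S) && induced_connected G S.

Definition crossing_closed_pair n (G : rel 'I_n) (e f : 'I_n * 'I_n) : Prop :=
  exists S : {set 'I_n}, minset (admissible G e f) S /\
    forall T : {set 'I_n}, minset (admissible G e f) T -> T = S.

Definition crossing_closed n (G : rel 'I_n) : Prop :=
  forall e f, is_edge G e -> is_edge G f -> cross e f ->
    crossing_closed_pair G e f.

Definition tightly_closed n (G : rel 'I_n) : Prop :=
  crossing_closed G /\
  forall e f, is_edge G e -> is_edge G f -> cross e f ->
    forall S, minset (admissible G e f) S -> S = endpoints e f.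

(* If v is not an endpoint of e or f, 2-connectivity makes G - v an induced
   connected subgraph containing e and f. It contains a minimal such subgraph,
   which by uniqueness is J(e, f); hence v is not a vertex of J(e, f). *)
From mathcomp Require Import all_boot.

Set Implicit Arguments.
Unset Strict Implicit.
Unset Printing Implicit Defensive.

Lemma unique_minset_sub (T : finType) (P : pred {set T}) (S A : {set T}) :
  (forall B, minset P B -> B = S) -> P A -> S \subset A.
Proof.
move=> uniqS PA; have [B minB subBA] := minset_exists PA.
by rewrite -(uniqS B minB).
Qed.

Lemma subset_of_setD1 (T : finType) (A B : {set T}) :
  (forall v, v \notin B -> A \subset [set: T] :\ v) -> A \subset B.
Proof.
move=> subA; apply/subsetP => x xA; apply/negPn/negP => xNB.
by have /subsetP/(_ x xA) := subA x xNB; rewrite !inE eqxx.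
Qed.

Lemma admissible_setD1 (n : nat) (G : rel 'I_n) (e f : 'I_n * 'I_n) (v : 'I_n) :
  two_connected G -> v \notin endpoints e f ->
  admissible G e f ([set: 'I_n] :\ v).
Proof.
move=> [_ [_ connD1]] vNE; rewrite /admissible connD1 andbT.
by apply/subsetP => x xE; rewrite !inE andbT; apply: contraNneq vNE => <-.
Qed.

Theorem proposition5p14 (n : nat) (G : rel 'I_n) :
  simple_graph G -> two_connected G -> crossing_closed G -> tightly_closed G.
Proof.
move=> _ conn2 cc; split=> // e f e_edge f_edge ef_cross S minS.
have [J [_ uniqJ]] := cc e f e_edge f_edge ef_cross.
have SJ := uniqJ S minS; subst S.
apply/eqP; rewrite eqEsubset; apply/andP; split.
- apply: subset_of_setD1 => v vNE.
  exact/(unique_minset_sub uniqJ)/admissible_setD1.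
- by case/andP: (minsetp minS).
Qed.
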